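(* Let $H$ and $J$ be finite graphs, let $S\subseteq V(H)$ and $T\subseteq V(J)$ with $|S| = |T|$, and let $f : S\to T$ be a bijection. Let $H\circ_f J$ denote the graph obtained from the disjoint union of $H$ and $J$ by identifying each vertex $x\in S$ with the vertex $f(x)\in T$ (the identified vertex being regarded as $x$), so that $V(H\circ_f J) = V(H)\cup (V(J)\setminus T)$ and $E(H\circ_f J) = E(H)\cup E(J)$ (edges of $J$ incident with $T$ being transferred to the corresponding vertices of $S$). If $S$ is a decycling set of $H$ and $T$ is a decycling set of $J$, then $S$ is a decycling set of $H\circ_f J$. Moreover, if $S$ is a minimum decycling set of $H$ and $T$ is a minimum decycling set of $J$, then $S$ is a minimum decycling set of $H\circ_f J$.
   Context: For a graph $G$, a set $S\subseteq V(G)$ is a decycling set of $G$ if $G - S$ is acyclic (a forest). The decycling number $\nabla(G)$ is the smallest size of a decycling set of $G$, and a decycling set of this size is a minimum decycling set. *)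

From mathcomp Require Import all_boot.
Set Implicit Arguments. Unset Strict Implicit. Unset Printing Implicit Defensive.

Definition simple_graph (V : finType) (e : rel V) : Prop :=
  symmetric e /\ irreflexive e.

Definition is_cycle (V : finType) (e : rel V) (c : seq V) : Prop :=
  (3 <= size c) /\ ucycle e c.

(* G - S is acyclic (a forest): every cycle of G meets S. *)
Definition decycling (V : finType) (e : rel V) (S : {set V}) : Prop :=
  forall c : seq V, is_cycle e c -> has (fun v => v \in S) c.

Definition min_decycling (V : finType) (e : rel V) (S : {set V}) : Prop :=
  decycling e S /\ forall X : {set V}, decycling e X -> #|S| <= #|X|.

Section Glue.
Variables (VH VJ : finType) (eH : rel VH) (eJ : rel VJ)
          (S : {set VH}) (T : {set VJ}) (f : VH -> VJ).

Definition glue_keep (x : VH + VJ) : bool :=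
  match x with inl _ => true | inr y => y \notin T end.

Definition glue_vert : finType := {x : VH + VJ | glue_keep x}.

Definition glue_inH (x : VH) : glue_vert := @exist _ glue_keep (inl x) isT.

(* [glue_rep y u] : the vertex y of J is represented by the vertex u of the
   glued graph (y in T is represented by the x in S with f x = y). *)
Definition glue_rep (y : VJ) (u : glue_vert) : bool :=
  match sval u with
  | inl x => (x \in S) && (f x == y)
  | inr y' => y' == y
  end.

(* E(H o_f J) = E(H) u E(J), edges of J transferred along f^-1 on T. *)
Definition glue_edge : rel glue_vert := fun u v =>
  (match sval u, sval v with inl a, inl b => eH a b | _, _ => false end)
  || [exists y, exists z, [&& eJ y z, glue_rep y u & glue_rep z v]].

Definition glue_S : {set glue_vert} := glue_inH @: S.

End Glue.

Arguments glue_vert VH VJ T : clear implicits.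
Arguments glue_rep {VH VJ} S T f y u.
Arguments glue_edge {VH VJ} eH eJ S T f u v.
Arguments glue_S {VH VJ} S T.

(* A cycle of the glued graph that avoids S cannot switch sides: an edge
   between a vertex of H and a vertex of J - T comes from an edge of J at a
   vertex of T, whose representative lies in S.  So such a cycle is a cycle of
   H avoiding S or a cycle of J avoiding T.  For minimality, H is a subgraph
   of the glued graph, so every decycling set X of the glued graph meets V(H)
   in a decycling set of H, and |S| <= |X :&: V(H)| <= |X|. *)

From mathcomp Require Import all_boot.

Set Implicit Arguments.
Unset Strict Implicit.
Unset Printing Implicit Defensive.

Lemma is_cycle_map_in (U V : finType) (e : rel U) (e' : rel V) (P : pred U)
    (p : U -> V) (c : seq U) :
  {in P &, injective p} -> {in P &, {homo p : u v / e u v >-> e' u v}} ->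
  all P c -> is_cycle e c -> is_cycle e' (map p c).
Proof.
move=> p_inj p_homo cP [size_c /andP[cyc_c uniq_c]]; split.
- by rewrite size_map.
- rewrite /ucycle (homo_cycle_in p_homo cP cyc_c) map_inj_in_uniq //.
  by apply: sub_in2 p_inj => u; apply: (allP cP).
Qed.

Lemma decycling_has_map_in (U V : finType) (e : rel U) (e' : rel V)
    (P : pred U) (p : U -> V) (D : {set V}) (c : seq U) :
  decycling e' D ->
  {in P &, injective p} -> {in P &, {homo p : u v / e u v >-> e' u v}} ->
  all P c -> is_cycle e c -> has (fun u => p u \in D) c.
Proof.
move=> dD p_inj p_homo cP cc.
by rewrite -has_map; apply: dD; apply: is_cycle_map_in p_inj p_homo cP cc.
Qed.

Lemma decycling_preimset (U V : finType) (e : rel U) (e' : rel V)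
    (p : U -> V) (D : {set V}) :
  injective p -> {homo p : u v / e u v >-> e' u v} ->
  decycling e' D -> decycling e (p @^-1: D).
Proof.
move=> p_inj p_homo dD c cc; under eq_has do rewrite inE.
apply: (decycling_has_map_in (P := predT) dD _ _ _ cc); last exact: all_predT.
- by move=> u v _ _; apply: p_inj.
- by move=> u v _ _; apply: p_homo.
Qed.

Lemma card_preimset_leq (U V : finType) (p : U -> V) (D : {set V}) :
  injective p -> #|p @^-1: D| <= #|D|.
Proof.
move=> p_inj; rewrite -(card_imset _ p_inj); apply: subset_leq_card.
by apply/subsetP => _ /imsetP[u + ->]; rewrite inE.
Qed.

Section Glue.

Variables (VH VJ : finType) (eH : rel VH) (eJ : rel VJ)
          (S : {set VH}) (T : {set VJ}) (f : VH -> VJ).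

Local Notation G := (glue_vert VH VJ T).
Local Notation e := (glue_edge eH eJ S T f).
Local Notation SG := (glue_S S T).

Definition glue_isH (u : G) : bool := if sval u is inl _ then true else false.

Definition glue_projH (a0 : VH) (u : G) : VH :=
  if sval u is inl a then a else a0.

Definition glue_projJ (y0 : VJ) (u : G) : VJ :=
  if sval u is inr y then y else y0.

Lemma glue_inH_inj : injective (@glue_inH VH VJ T).
Proof. by move=> a b /(congr1 val) []. Qed.

Lemma glue_inH_edge : {homo glue_inH T : a b / eH a b >-> e a b}.
Proof. by move=> a b ab; rewrite /glue_edge /= ab. Qed.

Lemma mem_glue_S (a : VH) (ka : glue_keep T (inl a)) :
  (exist _ (inl a) ka \in SG) = (a \in S).
Proof.
have -> : exist _ (inl a) ka = glue_inH T a :> G by apply: val_inj.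
exact/mem_imset/glue_inH_inj.
Qed.

Lemma card_glue_S : #|SG| = #|S|.
Proof. exact/card_imset/glue_inH_inj. Qed.

Lemma glue_edge_side (u v : G) :
  e u v -> u \notin SG -> v \notin SG -> glue_isH u = glue_isH v.
Proof.
case: u v => [[a|y] ka] [[b|z] kb] //=;
  rewrite /glue_edge /= => /existsP[y0 /existsP[z0 /and3P[_]]].
- by rewrite /glue_rep /= mem_glue_S => /andP[-> _].
- by rewrite /glue_rep /= mem_glue_S => _ /andP[-> _].
Qed.

Lemma glue_cycle_one_side (c : seq G) :
  is_cycle e c -> all [predC SG] c ->
  all glue_isH c \/ all (fun u => ~~ glue_isH u) c.
Proof.
case: c => [[//]|u s] [_ /andP[cyc_us _]] cS.
have us : path e u s by move: cyc_us; rewrite /= rcons_path => /andP[].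
have side_eq : {in [predC SG] &,
    subrel e [rel v w | glue_isH v == glue_isH w]}.
  by move=> v w vS wS vw; rewrite /= (glue_edge_side vw vS wS).
have /allP s_side : all (fun v => glue_isH u == glue_isH v) (u :: s).
  rewrite /= eqxx.
  apply: (order_path_min (leT := [rel v w | glue_isH v == glue_isH w])).
  - by move=> v w x /= /eqP ->.
  - exact: (sub_in_path side_eq cS us).
case Hu: (glue_isH u); [left | right]; apply/allP => v /s_side; rewrite Hu.
- by move/eqP <-.
- by move=> /eqP <-.
Qed.

Lemma glue_cycle_inH_meets_S (c : seq G) :
  decycling eH S -> is_cycle e c -> all glue_isH c -> ~~ all [predC SG] c.
Proof.
move=> dH; case: c => [[//]|u s] cc cH; apply/negP => cS.
have [a _] : exists a, sval u = inl a.
  by move: cH => /andP[]; rewrite /glue_isH; case: (sval u) => // a; exists a.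
have /hasP[v vc] : has (fun v => glue_projH a v \in S) (u :: s).
  apply: (decycling_has_map_in (P := [predI glue_isH & [predC SG]]) dH
            _ _ _ cc).
  - move=> [[x|y] kx] [[x'|y'] kx'] //= _ _; rewrite /glue_projH /= => xx'.
    by apply: val_inj; rewrite /= xx'.
  - move=> [[x|y] kx] [[x'|y'] kx'] //= /andP[_].
    rewrite inE mem_glue_S /glue_projH /glue_edge /= => xS _.
    case/orP=> // /existsP[y0 /existsP[z0 /and3P[_ /andP[xS' _] _]]].
    by rewrite xS' in xS.
  - by rewrite all_predI cH.
move: (allP cH v vc) (allP cS v vc); case: v {vc} => [[x|y] kx] //= _.
by rewrite mem_glue_S /glue_projH /= => /negP.
Qed.

Lemma glue_cycle_meets_H (c : seq G) :
  decycling eJ T -> is_cycle e c -> ~~ all (fun u => ~~ glue_isH u) c.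
Proof.
move=> dJ; case: c => [[//]|u s] cc; apply/negP => cJ.
have [y _] : exists y, sval u = inr y.
  move: cJ => /andP[]; rewrite /glue_isH /=.
  by case: (sval u) => // y; exists y.
have /hasP[v vc] : has (fun v => glue_projJ y v \in T) (u :: s).
  apply: (decycling_has_map_in (P := fun u => ~~ glue_isH u) dJ _ _ cJ cc).
  - move=> [[x|z] kz] [[x'|z'] kz'] //= _ _; rewrite /glue_projJ /= => zz'.
    by apply: val_inj; rewrite /= zz'.
  - move=> [[x|z] kz] [[x'|z'] kz'] //= _ _.
    rewrite /glue_edge /glue_projJ /=.
    by case/existsP=> y0 /existsP[z0 /and3P[+ /eqP -> /eqP ->]].
move: (allP cJ v vc); case: v {vc} => [[x|z] kz] //= _.
by rewrite /glue_projJ /= => zT; move: kz; rewrite /= zT.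
Qed.

Lemma glue_decycling : decycling eH S -> decycling eJ T -> decycling e SG.
Proof.
move=> dH dJ c cc; apply/negPn/negP; rewrite -all_predC => cS.
have [cH | cJ] := glue_cycle_one_side cc cS.
- by move/negP: (glue_cycle_inH_meets_S dH cc cH).
- by move/negP: (glue_cycle_meets_H dJ cc).
Qed.

End Glue.

Theorem mainTheorem1 (VH VJ : finType) (eH : rel VH) (eJ : rel VJ)
    (S : {set VH}) (T : {set VJ}) (f : VH -> VJ) :
  simple_graph eH -> simple_graph eJ ->
  {in S &, injective f} -> f @: S = T ->
  (decycling eH S -> decycling eJ T ->
     decycling (glue_edge eH eJ S T f) (glue_S S T)) /\
  (min_decycling eH S -> min_decycling eJ T ->
     min_decycling (glue_edge eH eJ S T f) (glue_S S T)).
Proof.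
move=> _ _ _ _; split=> [|[dS minS] [dT _]]; first exact: glue_decycling.
split; first exact: glue_decycling.
move=> X dX; rewrite card_glue_S.
have dXH : decycling eH (glue_inH T @^-1: X).
  by apply: decycling_preimset dX; [exact: glue_inH_inj | exact: glue_inH_edge].
exact/(leq_trans (minS _ dXH))/card_preimset_leq/glue_inH_inj.
Qed.
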